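(* Let $G=(N,A)$ be a directed graph with arc capacities $u_{ij}\ge0$, and suppose there is a single commodity ($K=\{1\}$) with origin $O(1)$ and destination $D(1)$. Fix $\bar y\in\{0,1\}^{|A|}$ and a scenario $\bar s$ with demand $d^1(\omega_{\bar s})\ge0$, and assume $\bar y$ is not feasible for $\bar s$. Let $\mathcal C$ be the set of all $(O(1),D(1))$ cuts in $G$ and let $$C^*_{\mathrm{SNC}}\in\arg\max_{C\in\mathcal C}\frac{d^1(\omega_{\bar s})-\sum_{(i,j)\in C}u_{ij}\bar y_{ij}}{|C|+1}.$$ Then there is an optimal solution $(\mu^*,\pi^*,\lambda^* )$ of the SNC dual program at $(\bar y,\omega_{\bar s})$ whose derived feasibility cut $d^1(\omega_{\bar s})\lambda^{1*}-\sum_{(i,j)\in A}u_{ij}\pi^*_{ij}y_{ij}\le0$ (in variables $y$) is equivalent to $$\sum_{(i,j)\in C^*_{\mathrm{SNC}}}u_{ij}y_{ij}\ge d^1(\omega_{\bar s}).$$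
   Context: Admissible arcs for commodity 1: $A^1=\{(i,j)\in A: j\neq O(1),\ i\neq D(1)\}$. Feasibility: $\bar y$ is feasible for scenario $\bar s$ if there exist flows $x^1_{ij}\ge0$, $(i,j)\in A^1$, with flow conservation at every $i\notin\{O(1),D(1)\}$, capacities $x^1_{ij}\le u_{ij}\bar y_{ij}$, and inflow into $D(1)$ at least $d^1(\omega_{\bar s})$. An $(O(1),D(1))$ cut is an arc set $\{(i,j)\in A: i\in W, j\notin W\}$ for some $W\subseteq N$ with $O(1)\in W$, $D(1)\notin W$. The SNC dual program at $(y,\omega)$: maximize $d^1(\omega)\lambda^1-\sum_{(i,j)\in A}u_{ij}y_{ij}\pi_{ij}$ over $\mu^1_i$ free ($i\in N$), $\pi_{ij}\ge0$, $\lambda^1\ge0$, subject to $\mu^1_{O(1)}=0$, $\mu^1_{D(1)}=\lambda^1$, $\pi_{ij}\ge\mu^1_j-\mu^1_i$ for all $(i,j)\in A^1$, and $\sum_{(i,j)\in A}\pi_{ij}+\lambda^1\le1$. ''Equivalent'' means the two inequalities define the same set of $y$ (they coincide up to a positive scalar multiple). *)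

From mathcomp Require Import all_boot all_order all_algebra.
Set Implicit Arguments. Unset Strict Implicit. Unset Printing Implicit Defensive.
Import Order.TTheory GRing.Theory Num.Theory.
Local Open Scope ring_scope.

Section SNC.
Variables (R : realFieldType) (N : finType).
Variable A : {set N * N}.
Variables (u : N * N -> R) (O D : N).

Definition adm (a : N * N) : bool := [&& a \in A, a.2 != O & a.1 != D].

Definition feasible (ybar : N * N -> bool) (d : R) : Prop :=
  exists x : N * N -> R,
    [/\ (forall a, adm a -> 0 <= x a),
        (forall i, i != O -> i != D ->
           \sum_(a in A | adm a && (a.2 == i)) x a
           = \sum_(a in A | adm a && (a.1 == i)) x a),
        (forall a, adm a -> x a <= u a * (ybar a)%:R) &
        d <= \sum_(a in A | adm a && (a.2 == D)) x a].

Definition cut_of (W : {set N}) : {set N * N} :=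
  [set a in A | (a.1 \in W) && (a.2 \notin W)].

Definition is_OD_cut (C : {set N * N}) : Prop :=
  exists W : {set N}, [/\ O \in W, D \notin W & C = cut_of W].

Definition cut_ratio (ybar : N * N -> bool) (d : R) (C : {set N * N}) : R :=
  (d - \sum_(a in C) u a * (ybar a)%:R) / (#|C|%:R + 1).

Definition is_argmax_cut (ybar : N * N -> bool) (d : R) (C : {set N * N}) : Prop :=
  is_OD_cut C /\
  forall C', is_OD_cut C' -> cut_ratio ybar d C' <= cut_ratio ybar d C.

Definition dual_feasible (mu : N -> R) (pi : N * N -> R) (lam : R) : Prop :=
  [/\ mu O = 0 /\ mu D = lam, 0 <= lam,
      (forall a, a \in A -> 0 <= pi a),
      (forall a, adm a -> mu a.2 - mu a.1 <= pi a) &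
      \sum_(a in A) pi a + lam <= 1].

Definition dual_obj (y : N * N -> R) (d : R) (pi : N * N -> R) (lam : R) : R :=
  d * lam - \sum_(a in A) u a * y a * pi a.

Definition dual_optimal (y : N * N -> R) (d : R)
  (mu : N -> R) (pi : N * N -> R) (lam : R) : Prop :=
  dual_feasible mu pi lam /\
  forall mu' pi' lam', dual_feasible mu' pi' lam' ->
    dual_obj y d pi' lam' <= dual_obj y d pi lam.

End SNC.

From mathcomp Require Import all_boot all_order all_algebra.
From mathcomp Require Import lra zify.
Import Order.TTheory GRing.Theory Num.Theory.
Local Open Scope ring_scope.

(* The cut C* = delta(W* ) yields the dual solution with lambda = 1/(|C*| + 1), pi
   equal to lambda on C* and 0 elsewhere, and mu equal to 0 on W* and lambda
   off W*; its objective is the ratio r of C*, and its feasibility cut is the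
   cut-set inequality of C* scaled by lambda.  It is optimal by weak duality:
   maximality of r says that with capacities u ybar + r every cut has capacity
   at least d - r, so by max-flow/min-cut some flow of value d - r respects
   them, and pairing it with any dual solution bounds that solution's objective
   by r.  Infeasibility of ybar gives, again by max-flow/min-cut, a cut of
   capacity below d, whence r >= 0.  Max-flow/min-cut holds over any ordered
   field; it is proved by induction, deleting, lowering or contracting arcs. *)

Set Implicit Arguments. Unset Strict Implicit. Unset Printing Implicit Defensive.

Section MaxFlowMinCut.
Variables (R : realFieldType) (N E : finType) (s t : N).
Hypothesis s_neq_t : s != t.

Implicit Types (tl hd : E -> N) (c f : E -> R) (W : {set N}) (d : R).

Definition flow_at (h : E -> N) f v := \sum_(x | h x == v) f x.

Definition flow_value tl hd f := flow_at hd f t - flow_at tl f t.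

Definition cut_capacity tl hd c W := \sum_(x | (tl x \in W) && (hd x \notin W)) c x.

Definition conserves tl hd f :=
  forall v, v != s -> v != t -> flow_at hd f v = flow_at tl f v.

Definition is_flow tl hd c f := (forall x, 0 <= f x <= c x) /\ conserves tl hd f.

Definition admits_flow tl hd c d :=
  exists2 f, is_flow tl hd c f & d <= flow_value tl hd f.

Definition cuts_exceed tl hd c d :=
  forall W, s \in W -> t \notin W -> d <= cut_capacity tl hd c W.

Lemma sum_update (P : pred E) f e a :
  \sum_(x | P x) [eta f with e |-> a] x =
  \sum_(x | P x) f x + (if P e then a - f e else 0).
Proof.
case: (boolP (P e)) => Pe /=; last first.
  by rewrite addr0; apply: eq_bigr => x Px /=; case: eqP => // xe; rewrite -xe Px in Pe.
rewrite (bigD1 e) //= [in RHS](bigD1 e) //= eqxx.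
rewrite (eq_bigr f); last by move=> x /andP[_ /negbTE ->].
lra.
Qed.

Lemma flow_at_update h f e a v :
  flow_at h [eta f with e |-> a] v = flow_at h f v + (if h e == v then a - f e else 0).
Proof. exact: sum_update. Qed.

Lemma cut_capacity_update tl hd c e a W :
  cut_capacity tl hd [eta c with e |-> a] W =
  cut_capacity tl hd c W + (if (tl e \in W) && (hd e \notin W) then a - c e else 0).
Proof. exact: sum_update. Qed.

Lemma update_gt0 c e a x : a <= c e -> 0 < [eta c with e |-> a] x -> 0 < c x.
Proof. by move=> ace /=; case: eqP => [-> a_gt0|//]; apply: lt_le_trans ace. Qed.

Lemma update_ge0 c e a : (forall x, 0 <= c x) -> 0 <= a -> forall x, 0 <= [eta c with e |-> a] x.
Proof. by move=> c_ge0 a_ge0 x /=; case: eqP. Qed.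

Lemma is_flow_le tl hd c c' f :
  (forall x, c x <= c' x) -> is_flow tl hd c f -> is_flow tl hd c' f.
Proof.
move=> le_cc' [f_cap f_cons]; split=> // x.
by have /andP[-> /le_trans->] := f_cap x.
Qed.

Lemma sum_flow_at (h : E -> N) f (mu : N -> R) :
  \sum_x f x * mu (h x) = \sum_v mu v * flow_at h f v.
Proof.
rewrite (partition_big h xpredT) //=; apply: eq_bigr => v _.
by rewrite /flow_at mulr_sumr; apply: eq_bigr => x /eqP ->; rewrite mulrC.
Qed.

Lemma flow_value_potential tl hd f (mu : N -> R) :
  conserves tl hd f -> mu s = 0 ->
  \sum_x f x * (mu (hd x) - mu (tl x)) = mu t * flow_value tl hd f.
Proof.
move=> f_cons mu_s.
under eq_bigr do rewrite mulrBr.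
rewrite sumrB !sum_flow_at -sumrB (bigD1 t) //= (bigD1 s) ?s_neq_t //=.
rewrite big1 ?mu_s; first by rewrite /flow_value; lra.
by move=> v /andP[vt vs]; rewrite f_cons //; lra.
Qed.

Lemma cut_saturated tl hd c f W :
  is_flow tl hd c f -> s \in W -> t \notin W ->
  cut_capacity tl hd c W <= flow_value tl hd f ->
  (forall x, tl x \in W -> hd x \notin W -> f x = c x) /\
  (forall x, tl x \notin W -> hd x \in W -> f x = 0).
Proof.
move=> [f_cap f_cons] sW tW cap_le.
have := flow_value_potential (mu := fun v => (v \notin W)%:R) f_cons.
rewrite /= sW tW /= mul1r => /(_ erefl) value_eq.
pose slack x := (if (tl x \in W) && (hd x \notin W) then c x - f x else 0) +
                (if (tl x \notin W) && (hd x \in W) then f x else 0).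
have slack_ge0 x : 0 <= slack x.
  have /andP[f_ge0 f_le] := f_cap x.
  by rewrite /slack; case: (tl x \in W); case: (hd x \in W) => /=; lra.
have slack_sum : \sum_x slack x = cut_capacity tl hd c W - flow_value tl hd f.
  rewrite -value_eq /cut_capacity [in RHS]big_mkcond /= -sumrB; apply: eq_bigr => x _.
  by rewrite /slack; case: (tl x \in W); case: (hd x \in W) => /=; lra.
have slack0 : \sum_x slack x = 0.
  by apply: le_anti; rewrite sumr_ge0 // slack_sum andbT; lra.
have := psumr_eq0P (fun x _ => slack_ge0 x) slack0 => slackx.
by split=> x h1 h2; have := slackx x erefl; rewrite /slack h1 h2 /= ?andbF /=; lra.
Qed.

Definition support tl hd c := [set x | (0 < c x) && (tl x != hd x)].

Definition inner_active tl hd c := [set v | [&& v != s, v != t &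
  [exists x in support tl hd c, (tl x == v) || (hd x == v)]]].

Definition complexity tl hd c := (#|support tl hd c| + #|inner_active tl hd c|)%N.

Lemma complexity_lt_drop_arc tl hd c c' e :
  (forall x, 0 < c' x -> 0 < c x) -> e \in support tl hd c -> ~~ (0 < c' e) ->
  (complexity tl hd c' < complexity tl hd c)%N.
Proof.
move=> pos e_supp c'e.
have lt_supp : support tl hd c' \proper support tl hd c.
  apply/properP; split; last by exists e => //; rewrite inE (negbTE c'e).
  by apply/subsetP => x; rewrite !inE => /andP[/pos -> ->].
have le_act : inner_active tl hd c' \subset inner_active tl hd c.
  apply/subsetP => v; rewrite !inE => /and3P[-> -> /existsP[x /andP[x_supp xv]]].
  apply/existsP; exists x; rewrite xv andbT.
  by move: x_supp; rewrite !inE => /andP[/pos -> ->].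
have := proper_card lt_supp; have := subset_leq_card le_act; rewrite /complexity; lia.
Qed.

Lemma complexity_lt_contract (phi : N -> N) tl hd c c' v0 :
  (forall x, 0 < c' x -> 0 < c x) ->
  (forall w, phi w != s -> phi w != t -> phi w = w) ->
  v0 \in inner_active tl hd c -> (forall w, phi w != v0) ->
  (complexity (phi \o tl) (phi \o hd) c' < complexity tl hd c)%N.
Proof.
move=> pos phi_id v0_act v0_out.
have le_supp : support (phi \o tl) (phi \o hd) c' \subset support tl hd c.
  apply/subsetP => x; rewrite !inE /= => /andP[/pos -> ne].
  by apply: contraNneq ne => ->.
have lt_act : inner_active (phi \o tl) (phi \o hd) c' \proper inner_active tl hd c.
  apply/properP; split; last first.
    exists v0 => //; rewrite !inE; apply/negP => /and3P[_ _ /existsP[x /andP[_]]].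
    by rewrite /= !(negbTE (v0_out _)).
  apply/subsetP => v; rewrite !inE => /and3P[vs vt /existsP[x /andP[x_supp xv]]].
  rewrite vs vt; apply/existsP; exists x; rewrite (subsetP le_supp) //=.
  by case/orP: xv => /eqP /= phi_v; rewrite -phi_v phi_id ?phi_v ?eqxx ?orbT.
have := proper_card lt_act; have := subset_leq_card le_supp; rewrite /complexity; lia.
Qed.

Lemma cut_capacity_comp (phi : N -> N) tl hd c W :
  cut_capacity (phi \o tl) (phi \o hd) c W = cut_capacity tl hd c [set v | phi v \in W].
Proof. by apply: eq_bigl => x; rewrite !inE. Qed.

Lemma cuts_exceed_comp (phi : N -> N) tl hd c d :
  phi s = s -> phi t = t -> cuts_exceed tl hd c d -> cuts_exceed (phi \o tl) (phi \o hd) c d.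
Proof.
move=> phi_s phi_t cuts W sW tW; rewrite cut_capacity_comp.
by apply: cuts; rewrite inE ?phi_s ?phi_t.
Qed.

Lemma flow_at_comp (phi : N -> N) h f g v :
  (forall w, (phi w == v) = (w == v)) -> (forall x, h x == v -> f x = g x) ->
  flow_at (phi \o h) g v = flow_at h f v.
Proof.
move=> phi_v fg; apply: eq_big => x; first by rewrite /= phi_v.
by rewrite /= phi_v => /fg ->.
Qed.

Definition contract_out W v := if v \in W then v else t.

Definition contract_in W v := if v \in W then s else v.

Lemma admits_flow_glue tl hd c d W : s \in W -> t \notin W ->
  cut_capacity tl hd c W <= d ->
  admits_flow (contract_out W \o tl) (contract_out W \o hd) c d ->
  admits_flow (contract_in W \o tl) (contract_in W \o hd) c d ->
  admits_flow tl hd c d.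
Proof.
move=> sW tW cap_le [f1 f1_flow f1_val] [f2 f2_flow f2_val].
have out_mem v : (contract_out W v \in W) = (v \in W).
  by rewrite /contract_out; case: ifP => // _; rewrite (negbTE tW).
have in_mem v : (contract_in W v \in W) = (v \in W).
  by rewrite /contract_in; case: ifP.
have out_eq v : v \in W -> forall w, (contract_out W w == v) = (w == v).
  move=> vW w; rewrite /contract_out; case: ifP => // wW.
  by apply/eqP/eqP => [tv | wv]; [move: tW | move: wW]; rewrite ?tv ?wv vW.
have in_eq v : v \notin W -> forall w, (contract_in W w == v) = (w == v).
  move=> vW w; rewrite /contract_in; case: ifP => // wW.
  by apply/eqP/eqP => [sv | wv]; [move: sW | move: wW]; rewrite ?sv ?wv (negbTE vW).
have out_cap : cut_capacity (contract_out W \o tl) (contract_out W \o hd) c W =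
               cut_capacity tl hd c W.
  by rewrite cut_capacity_comp; congr cut_capacity; apply/setP => v; rewrite inE out_mem.
have in_cap : cut_capacity (contract_in W \o tl) (contract_in W \o hd) c W =
              cut_capacity tl hd c W.
  by rewrite cut_capacity_comp; congr cut_capacity; apply/setP => v; rewrite inE in_mem.
have := cut_saturated f1_flow sW tW; rewrite out_cap => /(_ (le_trans cap_le f1_val)).
rewrite /= => -[sat1 zero1].
have := cut_saturated f2_flow sW tW; rewrite in_cap => /(_ (le_trans cap_le f2_val)).
rewrite /= => -[sat2 zero2].
(* On arcs crossing [W] both flows saturate the cut, so [f] is well glued. *)
pose f x := if (tl x \in W) && (hd x \in W) then f1 x else f2 x.
have f_f1 x : (tl x \in W) || (hd x \in W) -> f x = f1 x.
  rewrite /f; case: (boolP (tl x \in W)) => h1; case: (boolP (hd x \in W)) => h2 //= _.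
    by rewrite sat1 ?out_mem // sat2 ?in_mem.
  by rewrite zero1 ?out_mem // zero2 ?in_mem.
have f_f2 x : (tl x \notin W) || (hd x \notin W) -> f x = f2 x.
  by rewrite /f; case: (tl x \in W); case: (hd x \in W).
have at1 v : v \in W ->
    flow_at (contract_out W \o tl) f1 v = flow_at tl f v /\
    flow_at (contract_out W \o hd) f1 v = flow_at hd f v.
  by move=> vW; split; apply: flow_at_comp (out_eq v vW) _ => x /eqP hx;
    apply: f_f1; rewrite hx vW ?orbT.
have at2 v : v \notin W ->
    flow_at (contract_in W \o tl) f2 v = flow_at tl f v /\
    flow_at (contract_in W \o hd) f2 v = flow_at hd f v.
  by move=> vW; split; apply: flow_at_comp (in_eq v vW) _ => x /eqP hx;
    apply: f_f2; rewrite hx vW ?orbT.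
case: f1_flow f2_flow => [f1_cap f1_cons] [f2_cap f2_cons].
exists f; first split.
- by move=> x; rewrite /f; case: ifP.
- move=> v vs vt; case: (boolP (v \in W)) => vW.
    by have [<- <-] := at1 v vW; apply: f1_cons.
  by have [<- <-] := at2 v vW; apply: f2_cons.
- by rewrite /flow_value; have [<- <-] := at2 t tW.
Qed.

Section Reductions.
Variables (tl hd : E -> N) (c : E -> R) (d : R).
Hypothesis c_ge0 : forall x, 0 <= c x.
Hypothesis cuts : cuts_exceed tl hd c d.
Hypothesis IH : forall tl' hd' c' d', (complexity tl' hd' c' < complexity tl hd c)%N ->
  (forall x, 0 <= c' x) -> cuts_exceed tl' hd' c' d' -> admits_flow tl' hd' c' d'.

Lemma admits_flow_direct_arc e : 0 < c e -> tl e = s -> hd e = t -> admits_flow tl hd c d.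
Proof.
move=> ce te he.
have [f [f_cap f_cons] f_val] : admits_flow tl hd [eta c with e |-> 0] (d - c e).
  apply: IH; first apply: (complexity_lt_drop_arc (e := e)).
  - by move=> x; apply: update_gt0; apply: ltW.
  - by rewrite inE ce te he s_neq_t.
  - by rewrite /= eqxx ltxx.
  - exact: update_ge0.
  - move=> W sW tW; rewrite cut_capacity_update te he sW tW /=; have := cuts sW tW; lra.
have fe : f e = 0.
  by have := f_cap e; rewrite /= eqxx => /andP[? ?]; apply: le_anti; apply/andP.
exists [eta f with e |-> c e]; first split.
- move=> x; have := f_cap x; rewrite /=; case: eqP => [-> _|//].
  by rewrite lexx (ltW ce).
- move=> v vs vt; rewrite !flow_at_update te he (eq_sym t) (eq_sym s).
  by rewrite (negbTE vs) (negbTE vt) f_cons.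
- move: f_val; rewrite /flow_value !flow_at_update te he eqxx (negbTE s_neq_t) fe; lra.
Qed.

Lemma admits_flow_two_arc_path e1 e2 :
  0 < c e1 -> 0 < c e2 -> tl e1 = s -> hd e1 = tl e2 -> hd e2 = t ->
  tl e2 != s -> tl e2 != t -> admits_flow tl hd c d.
Proof.
move=> c1 c2 t1 h1 h2 v0s v0t.
set v0 := tl e2 in h1 v0s v0t.
pose a := Num.min (c e1) (c e2).
have a_gt0 : 0 < a by rewrite lt_min c1 c2.
have a_le1 : a <= c e1 by rewrite ge_min lexx.
have a_le2 : a <= c e2 by rewrite ge_min lexx orbT.
have e21 : e2 != e1 by apply: contraNneq v0t => e21; rewrite -h2 e21 h1.
pose c' := [eta [eta c with e1 |-> c e1 - a] with e2 |-> c e2 - a].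
have c'_gt0 x : 0 < c' x -> 0 < c x.
  by rewrite /=; case: eqP => [-> //|_]; case: eqP => [-> //|].
have c'_ge0 x : 0 <= c' x.
  by rewrite /=; case: eqP => _; [|case: eqP => _]; rewrite ?subr_ge0.
have [f [f_cap f_cons] f_val] : admits_flow tl hd c' (d - a).
  apply: IH => //; last first.
    move=> W sW tW; rewrite !cut_capacity_update /= (negbTE e21) t1 h1 h2 sW tW /=.
    by have := cuts sW tW; case: (v0 \in W) => /=; lra.
  have [le12 | lt21] := leP (c e1) (c e2).
    apply: (complexity_lt_drop_arc (e := e1)) => //; first by rewrite inE c1 t1 h1 eq_sym v0s.
    by rewrite /= eq_sym (negbTE e21) eqxx /a (min_l le12) subrr ltxx.
  apply: (complexity_lt_drop_arc (e := e2)) => //; first by rewrite inE c2 h2 v0t.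
  by rewrite /= eqxx /a (min_r (ltW lt21)) subrr ltxx.
exists [eta [eta f with e1 |-> f e1 + a] with e2 |-> f e2 + a]; first split.
- move=> x; have := f_cap x; rewrite /=.
  by case: eqP => [->|_]; [|case: eqP => [->|_]] => // /andP[? ?]; apply/andP; split; lra.
- move=> v vs vt; rewrite !flow_at_update /= (negbTE e21) t1 h1 h2.
  rewrite (eq_sym t) (eq_sym s) (negbTE vs) (negbTE vt) f_cons //.
  by case: (v0 == v); lra.
- move: f_val; rewrite /flow_value !flow_at_update /= (negbTE e21) t1 h1 h2 eqxx.
  by rewrite (negbTE s_neq_t) (negbTE v0t); lra.
Qed.

Lemma admits_flow_removable_arc e : 0 < c e -> tl e != hd e ->
  (forall W, s \in W -> t \notin W -> tl e \in W -> hd e \notin W ->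
     d <= cut_capacity tl hd c W - c e) ->
  admits_flow tl hd c d.
Proof.
move=> ce ne removable.
have [f f_flow f_val] : admits_flow tl hd [eta c with e |-> 0] d.
  apply: IH; first apply: (complexity_lt_drop_arc (e := e)).
  - by move=> x; apply: update_gt0; apply: ltW.
  - by rewrite inE ce ne.
  - by rewrite /= eqxx ltxx.
  - exact: update_ge0.
  move=> W sW tW; rewrite cut_capacity_update.
  case: (boolP ((tl e \in W) && (hd e \notin W))) => [/andP[eW hW] | eW] /=.
    by rewrite sub0r; apply: removable.
  by rewrite addr0 cuts.
by exists f => //; apply: is_flow_le f_flow => x /=; case: eqP => [->|//]; apply: ltW.
Qed.

Lemma admits_flow_inner_arc e :
  0 < c e -> tl e != hd e -> tl e != s -> hd e != t -> admits_flow tl hd c d.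
Proof.
move=> ce ne es et.
have e_supp : e \in support tl hd c by rewrite inE ce ne.
pose separates W := [&& s \in W, t \notin W, tl e \in W & hd e \notin W].
have [/existsP[W0 /andP[sepW0 W0_lt]] | /existsPn removable] :=
  boolP [exists W, separates W && (cut_capacity tl hd c W - c e < d)]; last first.
  apply: admits_flow_removable_arc ce ne _ => W sW tW eW hW.
  by have := removable W; rewrite /separates sW tW eW hW /= -leNgt.
have [W1 /and4P[sW1 tW1 eW1 hW1] W1_min] := arg_minP (cut_capacity tl hd c) sepW0.
have W1_le : cut_capacity tl hd c W1 <= cut_capacity tl hd c W0 by apply: W1_min.
(* Lowering [c e] to [a] keeps every cut at least [d] and makes [W1] tight. *)
pose a := d - (cut_capacity tl hd c W1 - c e).
have a_gt0 : 0 < a by rewrite /a; lra.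
have a_le : a <= c e by have := cuts sW1 tW1; rewrite /a; lra.
pose c' := [eta c with e |-> a].
have c'_gt0 x : 0 < c' x -> 0 < c x by apply: update_gt0 a_le.
have c'_ge0 : forall x, 0 <= c' x := update_ge0 e c_ge0 (ltW a_gt0).
have cuts' : cuts_exceed tl hd c' d.
  move=> W sW tW; rewrite cut_capacity_update.
  case: (boolP ((tl e \in W) && (hd e \notin W))) => eW /=; last by rewrite addr0 cuts.
  by have := W1_min W; rewrite /separates sW tW eW => /(_ erefl); rewrite /a; lra.
have tight : cut_capacity tl hd c' W1 <= d by rewrite cut_capacity_update eW1 hW1 /a /=; lra.
suff [f f_flow f_val] : admits_flow tl hd c' d.
  by exists f => //; apply: is_flow_le f_flow => x /=; case: eqP => [->|].
apply: (admits_flow_glue sW1 tW1 tight); apply: IH => //.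
- apply: (complexity_lt_contract (v0 := hd e)) => //.
  + by move=> w; rewrite /contract_out; case: ifP => // _; rewrite eqxx.
  + rewrite inE et /=; apply/andP; split; first by apply: contraNneq hW1 => ->.
    by apply/existsP; exists e; rewrite e_supp eqxx orbT.
  + move=> w; rewrite /contract_out; case: ifP => [wW|_]; last by rewrite eq_sym.
    by apply: contraNneq hW1 => <-.
- by apply: cuts_exceed_comp; rewrite /contract_out ?sW1 ?(negbTE tW1).
- apply: (complexity_lt_contract (v0 := tl e)) => //.
  + by move=> w; rewrite /contract_in; case: ifP => // _; rewrite eqxx.
  + rewrite inE es /=; apply/andP; split; first by apply: contraNneq tW1 => <-.
    by apply/existsP; exists e; rewrite e_supp eqxx.
  + move=> w; rewrite /contract_in; case: ifP => [_|wW]; first by rewrite eq_sym.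
    by apply: contraFneq wW => ->.
- by apply: cuts_exceed_comp; rewrite /contract_in ?sW1 ?(negbTE tW1).
Qed.

(* With no arc of the three kinds above, the source together with its positive
   out-neighbours is a cut of capacity zero. *)
Lemma admits_flow_no_useful_arc :
  (forall x, ~~ [&& 0 < c x, tl x == s & hd x == t]) ->
  (forall x y, ~~ [&& 0 < c x, 0 < c y, tl x == s, hd x == tl y &
                      [&& hd y == t, tl y != s & tl y != t]]) ->
  (forall x, ~~ [&& 0 < c x, tl x != hd x, tl x != s & hd x != t]) ->
  admits_flow tl hd c d.
Proof.
move=> no_direct no_path no_inner.
pose S := s |: [set v | [exists x, [&& 0 < c x, tl x == s & hd x == v]]].
have tS : t \notin S.
  rewrite !inE negb_or eq_sym s_neq_t /=; apply/existsP => -[x].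
  exact/negP/no_direct.
have cap0 : cut_capacity tl hd c S = 0.
  apply: big1 => x /andP[tlS hdS]; apply: le_anti; rewrite c_ge0 andbT leNgt.
  apply/negP => cx; have ne : tl x != hd x by apply: contraNneq hdS => <-.
  move: hdS; rewrite !inE negb_or => /andP[hds /existsPn/(_ x)].
  rewrite cx eqxx andbT /= => tlx.
  move: tlS (no_inner x); rewrite cx ne tlx !inE (negbTE tlx) /=.
  move=> /existsP[y /and3P[cy /eqP ys /eqP yx]] /negbNE/eqP hxt.
  have /negP := no_path y x; apply; rewrite cy cx ys yx hxt !eqxx tlx /=.
  apply: contraNneq tS => <-; rewrite !inE; apply/orP; right.
  by apply/existsP; exists y; rewrite cy ys yx !eqxx.
have d_le0 : d <= 0 by rewrite -cap0 cuts // setU11.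
exists (fun=> 0); first by split=> [x|v _ _]; rewrite ?lexx ?c_ge0 // /flow_at !big1.
by rewrite /flow_value /flow_at !big1 // subrr.
Qed.

End Reductions.

Theorem max_flow_min_cut tl hd c d :
  (forall x, 0 <= c x) -> cuts_exceed tl hd c d -> admits_flow tl hd c d.
Proof.
have [n] := ubnP (complexity tl hd c); elim: n tl hd c d => // n IHn tl hd c d lt_n c_ge0 cuts.
have IH tl' hd' c' d' : (complexity tl' hd' c' < complexity tl hd c)%N ->
    (forall x, 0 <= c' x) -> cuts_exceed tl' hd' c' d' -> admits_flow tl' hd' c' d'.
  by move=> lt_c; apply: IHn; apply: leq_trans lt_c _.
have [e /and3P[ce /eqP te /eqP he] | no_direct] :=
  pickP (fun x => [&& 0 < c x, tl x == s & hd x == t]).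
  exact: admits_flow_direct_arc c_ge0 cuts IH _ ce te he.
have [[e1 e2] /and5P[/= c1 c2 /eqP t1 /eqP h1 /and3P[/eqP h2 v0s v0t]] | no_path] :=
  pickP (fun p : E * E => [&& 0 < c p.1, 0 < c p.2, tl p.1 == s, hd p.1 == tl p.2 &
                            [&& hd p.2 == t, tl p.2 != s & tl p.2 != t]]).
  exact: admits_flow_two_arc_path c_ge0 cuts IH _ _ c1 c2 t1 h1 h2 v0s v0t.
have [e /and4P[ce ne es et] | no_inner] :=
  pickP (fun x => [&& 0 < c x, tl x != hd x, tl x != s & hd x != t]).
  exact: admits_flow_inner_arc c_ge0 cuts IH _ ce ne es et.
apply: admits_flow_no_useful_arc => // [x | x y | x]; apply/negbT;
  [exact: no_direct | exact: (no_path (x, y)) | exact: no_inner].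
Qed.

End MaxFlowMinCut.

Section SingleCommodity.
Variables (R : realFieldType) (N : finType) (A : {set N * N}) (u : N * N -> R) (O D : N).
Hypothesis O_neq_D : O != D.

Implicit Types (g f F : N * N -> R) (ybar : N * N -> bool) (W : {set N}) (C : {set N * N}) (d : R).

Definition adm_cap g a := if adm A O D a then g a else 0.

Lemma adm_in a : adm A O D a -> a \in A.
Proof. by case/and3P. Qed.

Lemma cut_capacity_adm g W : O \in W -> D \notin W ->
  cut_capacity fst snd (adm_cap g) W = \sum_(a in cut_of A W) g a.
Proof.
move=> OW DW; rewrite /cut_capacity /cut_of big_mkcond [RHS]big_mkcond /=.
apply: eq_bigr => a _; rewrite inE /adm_cap /adm.
case: (boolP (a.1 \in W)) => a1W; case: (boolP (a.2 \in W)) => a2W //=; rewrite ?andbF //.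
have -> : a.2 != O by apply: contraNneq a2W => ->.
have -> : a.1 != D by apply: contraNneq DW => <-.
by rewrite !andbT.
Qed.

Lemma sum_adm f (P : pred (N * N)) : (forall a, ~~ adm A O D a -> f a = 0) ->
  \sum_(a in A | adm A O D a && P a) f a = \sum_(a | P a) f a.
Proof.
move=> f0; rewrite big_mkcond [RHS]big_mkcond /=; apply: eq_bigr => a _.
case: (boolP (adm A O D a)) => a_adm /=; first by rewrite adm_in.
by rewrite andbF f0 //; case: (P a).
Qed.

Lemma admits_adm_flow g d : (forall a, adm A O D a -> 0 <= g a) ->
  (forall W, O \in W -> D \notin W -> d <= \sum_(a in cut_of A W) g a) ->
  admits_flow O D fst snd (adm_cap g) d.
Proof.
move=> g_ge0 cuts; apply: max_flow_min_cut => // [a | W OW DW].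
  by rewrite /adm_cap; case: ifP => // /g_ge0.
by rewrite cut_capacity_adm // cuts.
Qed.

Lemma adm_flow_eq0 g f a : is_flow O D fst snd (adm_cap g) f -> ~~ adm A O D a -> f a = 0.
Proof.
by case=> f_cap _ a_adm; have := f_cap a; rewrite /adm_cap (negbTE a_adm) -eq_le => /eqP.
Qed.

Lemma feasible_of_cuts ybar d : (forall a, a \in A -> 0 <= u a) ->
  (forall W, O \in W -> D \notin W -> d <= \sum_(a in cut_of A W) u a * (ybar a)%:R) ->
  feasible A u O D ybar d.
Proof.
move=> u_ge0 cuts.
have uy_ge0 a : adm A O D a -> 0 <= u a * (ybar a)%:R.
  by move=> adm_a; rewrite mulr_ge0 ?ler0n ?u_ge0 ?adm_in.
have [f f_flow f_val] := admits_adm_flow uy_ge0 cuts.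
have f0 := adm_flow_eq0 f_flow; case: f_flow => f_cap f_cons.
exists f; split.
- by move=> a _; case/andP: (f_cap a).
- by move=> i iO iD; rewrite !sum_adm //; apply: f_cons.
- by move=> a adm_a; have := f_cap a; rewrite /adm_cap adm_a => /andP[].
- rewrite sum_adm //; move: f_val; rewrite /flow_value [flow_at fst f D]big1 ?subr0 //.
  by move=> a /eqP a1; apply: f0; rewrite /adm a1 eqxx !andbF.
Qed.

Lemma infeasible_small_cut ybar d : (forall a, a \in A -> 0 <= u a) ->
  ~ feasible A u O D ybar d ->
  exists W, [/\ O \in W, D \notin W & \sum_(a in cut_of A W) u a * (ybar a)%:R < d].
Proof.
move=> u_ge0 infeasible.
have [/existsP[W /and3P[OW DW lt_d]] | /existsPn big_cuts] := boolP [exists W : {set N},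
  [&& O \in W, D \notin W & \sum_(a in cut_of A W) u a * (ybar a)%:R < d]].
  by exists W.
case: infeasible; apply: feasible_of_cuts => // W OW DW.
by have := big_cuts W; rewrite OW DW /= -leNgt.
Qed.

(* Weak duality against a flow for the capacities [u y + r], which exists by
   max-flow/min-cut. *)
Lemma dual_obj_le_of_cuts (y : N * N -> R) d r mu pi lam :
  0 <= r -> (forall a, a \in A -> 0 <= u a * y a) ->
  (forall W, O \in W -> D \notin W -> d - r <= \sum_(a in cut_of A W) (u a * y a + r)) ->
  dual_feasible A O D mu pi lam -> dual_obj A u y d pi lam <= r.
Proof.
move=> r_ge0 uy_ge0 cuts [[mu_O mu_D] lam_ge0 pi_ge0 pi_adm pi_sum].
have g_ge0 a : a \in A -> 0 <= u a * y a + r by move=> aA; rewrite addr_ge0 ?uy_ge0.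
have [f f_flow f_val] := admits_adm_flow (fun a adm_a => g_ge0 a (adm_in adm_a)) cuts.
have f0 := adm_flow_eq0 f_flow; case: (f_flow) => f_cap f_cons.
have := flow_value_potential O_neq_D (mu := mu) f_cons mu_O; rewrite mu_D => value_eq.
have le_pi : \sum_x f x * (mu x.2 - mu x.1) <= \sum_(a in A) (u a * y a + r) * pi a.
  rewrite [X in _ <= X]big_mkcond /=; apply: ler_sum => a _.
  case: (boolP (adm A O D a)) => adm_a; last first.
    by rewrite f0 // mul0r; case: ifP => // aA; rewrite mulr_ge0 ?g_ge0 ?pi_ge0.
  have /andP[f_ge0 f_le] := f_cap a; rewrite /adm_cap adm_a in f_le.
  rewrite adm_in //; apply: le_trans (ler_wpM2l f_ge0 (pi_adm a adm_a)) _.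
  by rewrite ler_wpM2r ?pi_ge0 ?adm_in.
rewrite value_eq in le_pi.
have lam_val : (d - r) * lam <= lam * flow_value D fst snd f by rewrite mulrC ler_wpM2l.
have r_sum : r * (\sum_(a in A) pi a + lam) <= r by rewrite -[leRHS]mulr1 ler_wpM2l.
have split_sum : \sum_(a in A) (u a * y a + r) * pi a =
    \sum_(a in A) u a * y a * pi a + r * \sum_(a in A) pi a.
  by rewrite mulr_sumr -big_split; apply: eq_bigr => a _; rewrite mulrDl.
move: le_pi lam_val r_sum; rewrite split_sum /dual_obj mulrBl mulrDr; lra.
Qed.

Lemma argmax_cut_bound ybar d C W : is_argmax_cut A u O D ybar d C ->
  O \in W -> D \notin W ->
  d - cut_ratio u ybar d C <= \sum_(a in cut_of A W) (u a * (ybar a)%:R + cut_ratio u ybar d C).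
Proof.
case=> _ C_max OW DW; have := C_max (cut_of A W) (ex_intro _ W (And3 OW DW erefl)).
rewrite {1}/cut_ratio ler_pdivrMr ?ltr_wpDl ?ler0n // mulrDr mulr1.
by rewrite big_split sumr_const -mulr_natr /=; lra.
Qed.

Lemma argmax_ratio_ge0 ybar d C W : is_argmax_cut A u O D ybar d C ->
  O \in W -> D \notin W -> \sum_(a in cut_of A W) u a * (ybar a)%:R <= d ->
  0 <= cut_ratio u ybar d C.
Proof.
case=> _ C_max OW DW W_le; apply: le_trans (C_max _ (ex_intro _ W (And3 OW DW erefl))).
by rewrite divr_ge0 ?subr_ge0 ?addr_ge0.
Qed.

Definition snc_weight (C : {set N * N}) : R := (#|C|%:R + 1)^-1.

Definition snc_pi (C : {set N * N}) a : R := if a \in C then snc_weight C else 0.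

Definition snc_mu W v : R := if v \in W then 0 else snc_weight (cut_of A W).

Lemma snc_weight_gt0 C : 0 < snc_weight C.
Proof. by rewrite invr_gt0 ltr_wpDl ?ler0n. Qed.

Lemma cut_of_subset W : cut_of A W \subset A.
Proof. by apply/subsetP => a; rewrite inE => /andP[]. Qed.

Lemma sum_snc_pi C F : C \subset A ->
  \sum_(a in A) F a * snc_pi C a = snc_weight C * \sum_(a in C) F a.
Proof.
move=> CA; rewrite mulr_sumr [RHS](eq_bigl (fun a => (a \in A) && (a \in C))); last first.
  by move=> a; case: (boolP (a \in C)) => aC; rewrite ?andbF // (subsetP CA).
by rewrite big_mkcondr /=; apply: eq_bigr => a _; rewrite /snc_pi; case: ifP; rewrite mulrC ?mul0r.
Qed.

Lemma snc_dual_feasible W : O \in W -> D \notin W ->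
  dual_feasible A O D (snc_mu W) (snc_pi (cut_of A W)) (snc_weight (cut_of A W)).
Proof.
move=> OW DW; have w_gt0 := snc_weight_gt0 (cut_of A W).
split.
- by rewrite /snc_mu OW (negbTE DW).
- exact: ltW.
- by move=> a _; rewrite /snc_pi; case: ifP => // _; apply: ltW.
- move=> a adm_a; rewrite /snc_mu /snc_pi inE adm_in //=.
  by case: (a.1 \in W); case: (a.2 \in W) => /=; lra.
- have := sum_snc_pi (fun=> 1) (cut_of_subset W); under eq_bigr do rewrite mul1r.
  rewrite sumr_const -mulr_natr mulrC /snc_weight => ->.
  by rewrite mul1r -[X in _ + X]mul1r -mulrDl mulfV ?gt_eqF ?ltr_wpDl ?ler0n.
Qed.

Lemma dual_obj_snc (y : N * N -> R) d C : C \subset A ->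
  dual_obj A u y d (snc_pi C) (snc_weight C) = (d - \sum_(a in C) u a * y a) * snc_weight C.
Proof. by move=> CA; rewrite /dual_obj sum_snc_pi // mulrBl (mulrC (snc_weight C)). Qed.

Lemma snc_cut_equiv (y : N * N -> R) d C : C \subset A ->
  (d * snc_weight C - \sum_(a in A) u a * snc_pi C a * y a <= 0) <->
  (d <= \sum_(a in C) u a * y a).
Proof.
move=> CA; under eq_bigr do rewrite mulrAC; rewrite sum_snc_pi //.
by rewrite (mulrC d) -mulrBr pmulr_rle0 ?snc_weight_gt0 ?subr_le0.
Qed.

End SingleCommodity.

Theorem theorem3 (R : realFieldType) (N : finType) (A : {set N * N})
  (u : N * N -> R) (O D : N) (ybar : N * N -> bool) (d : R) (Cstar : {set N * N}) :
  (forall a, a \in A -> 0 <= u a) ->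
  0 <= d ->
  ~ feasible A u O D ybar d ->
  is_argmax_cut A u O D ybar d Cstar ->
  exists (mu : N -> R) (pi : N * N -> R) (lam : R),
    dual_optimal A u O D (fun a => (ybar a)%:R) d mu pi lam /\
    (* the derived cut and the cut-set inequality coincide up to a positive multiple *)
    (exists c : R, 0 < c /\ d * lam = c * d /\
       forall a, a \in A -> u a * pi a = c * (u a * (a \in Cstar)%:R)) /\
    (* hence they define the same set of y *)
    (forall y : N * N -> R,
       (d * lam - \sum_(a in A) u a * pi a * y a <= 0) <->
       (d <= \sum_(a in Cstar) u a * y a)).
Proof.
move=> u_ge0 _ infeasible argmax; case: (argmax) => -[Ws [OWs DWs eC]] _; subst Cstar.
have O_neq_D : O != D by apply: contraNneq DWs => <-.
have [W0 [OW0 DW0 small]] := infeasible_small_cut O_neq_D u_ge0 infeasible.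
have ratio_ge0 := argmax_ratio_ge0 argmax OW0 DW0 (ltW small).
have uy_ge0 a : a \in A -> 0 <= u a * (ybar a)%:R by move=> aA; rewrite mulr_ge0 ?u_ge0.
exists (snc_mu R A Ws), (snc_pi R (cut_of A Ws)), (snc_weight R (cut_of A Ws)).
split; [split | split].
- exact: snc_dual_feasible.
- move=> mu pi lam feasible_dual; rewrite dual_obj_snc ?cut_of_subset //.
  exact: (dual_obj_le_of_cuts O_neq_D ratio_ge0 uy_ge0 (fun W => argmax_cut_bound argmax)
                              feasible_dual).
- exists (snc_weight R (cut_of A Ws)); split; first exact: snc_weight_gt0.
  split; first exact: mulrC.
  by move=> a _; rewrite /snc_pi; case: ifP; rewrite ?mulr1 ?mulr0 // mulrC.
- by move=> y; apply: snc_cut_equiv; apply: cut_of_subset.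
Qed.
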